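(* Let $\mathbb{I}=(I_n:n\in\omega)$ and $\mathbb{J}=(J_k:k\in\omega)$ be interval partitions of $\omega$ and $x,y\in 2^\omega$, and suppose $|J_k|\ge 2$ for every $k$. Then the following are equivalent: (1) $\mathrm{Match}(x,\mathbb{I})\not\subseteq\mathrm{Match}(y,\mathbb{J})$; (2) $|\mathrm{Match}(x,\mathbb{I})\setminus\mathrm{Match}(y,\mathbb{J})|=\mathfrak{c}$; (3) there are infinitely many $n$ such that for every $k$, either $J_k\not\subseteq I_n$ or $x\restriction J_k\neq y\restriction J_k$.
   Context: An interval partition of $\omega$ is a sequence of consecutive finite nonempty intervals covering $\omega$. For an interval partition $\mathbb{I}=(I_n)$ and $x\in2^\omega$, $\mathrm{Match}(x,\mathbb{I})=\{y\in 2^\omega : x\restriction I_n=y\restriction I_n \text{ for infinitely many } n\}$. $\mathfrak{c}=2^{\aleph_0}$. *)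

From mathcomp Require Import all_boot.
From mathcomp Require Import boolp classical_sets functions cardinality.
Set Implicit Arguments. Unset Strict Implicit. Unset Printing Implicit Defensive.
Local Open Scope classical_set_scope.

(* An interval partition of omega is encoded by its sequence of left endpoints
   a : nat -> nat with a 0 = 0 and a strictly increasing; the n-th interval is
   I_n = [a n, a (n+1)). These intervals are consecutive, finite, nonempty and
   cover omega; conversely every interval partition arises this way. *)
Definition interval_partition (a : nat -> nat) : Prop :=
  a 0 = 0 /\ forall n, a n < a n.+1.

Definition ipart (a : nat -> nat) (n : nat) : set nat :=
  [set i | a n <= i < a n.+1].

Definition agree_on (I : set nat) (x y : nat -> bool) : Prop :=
  forall i, I i -> x i = y i.

Definition Match (x : nat -> bool) (a : nat -> nat) : set (nat -> bool) :=
  [set y | forall N, exists2 n, N <= n & agree_on (ipart a n) x y].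

From mathcomp Require Import all_boot.
From mathcomp Require Import boolp classical_sets functions cardinality.
From mathcomp Require Import zify.
Set Implicit Arguments. Unset Strict Implicit.
Local Open Scope classical_set_scope.
Local Open Scope card_scope.

(* Call an index n "good" when no interval J_k inside I_n carries agreement
   of x and y.  The theorem is the cycle (1) -> (3) -> (2) -> (1):
   - (1) -> (3): if almost every n is bad, every z matching x on infinitely
     many I_n matches y on the J_k inside those I_n, so Match(x,I) is
     contained in Match(y,J).
   - (3) -> (2): pick good indices m_0 < m_1 < ... separated by wide gaps and
     in each gap a "code position" c_j in the interior of some J-interval.
     For s in 2^omega let encode s copy x on the selected intervals I_(m j),
     be ~y elsewhere, flipped by s j at c_j. *)

Section StrictlyIncreasing.
Variable f : nat -> nat.
Hypothesis f_inc : forall n, f n < f n.+1.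

Lemma inc_leq : {mono f : m n / m <= n}.
Proof. by apply: leq_mono; apply: homo_ltn => //; exact: ltn_trans. Qed.

Lemma inc_ltn : {mono f : m n / m < n}.
Proof. exact: leqW_mono inc_leq. Qed.

Lemma inc_inj : injective f.
Proof. exact: incn_inj inc_leq. Qed.

Lemma inc_ge_id n : n <= f n.
Proof. by elim: n => // n IH; apply: leq_ltn_trans IH (f_inc n). Qed.

End StrictlyIncreasing.

Section IntervalPartition.
Variable a : nat -> nat.
Hypothesis a_inc : forall n, a n < a n.+1.

Lemma ipart_left n : ipart a n (a n).
Proof. by rewrite /ipart /= leqnn a_inc. Qed.

Lemma ipart_uniq n n' i : ipart a n i -> ipart a n' i -> n = n'.
Proof.
move=> /andP[lo hi] /andP[lo' hi']; apply/eqP; rewrite eqn_leq.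
rewrite -ltnS -[n' <= n]ltnS -(inc_ltn a_inc n) -(inc_ltn a_inc n').
by apply/andP; split; lia.
Qed.

End IntervalPartition.

Definition infinitely_often (P : nat -> Prop) : Prop :=
  forall N, exists2 n, N <= n & P n.

Definition good_index (a b : nat -> nat) (x y : nat -> bool) (n : nat) : Prop :=
  forall k, ~ (ipart b k `<=` ipart a n) \/ ~ agree_on (ipart b k) x y.

Lemma sparse_subsequence (P : nat -> Prop) (f : nat -> nat) :
  infinitely_often P ->
  exists m : nat -> nat, (forall j, P (m j)) /\ (forall j, f (m j) <= m j.+1).
Proof.
move=> infP.
have [g gP] : {g : nat -> nat & forall N, N <= g N /\ P (g N)}.
  by apply: (@choice _ _ (fun N n => N <= n /\ P n)) => N; have [n] := infP N; exists n.
exists (fun j => iter j (g \o f) (g 0)); split.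
- by case=> [|j]; apply: (gP _).2.
- by move=> j; apply: (gP _).1.
Qed.

Lemma card_eqT_of_injection T (A : set T) (f : T -> T) :
  injective f -> (forall t, A (f t)) -> A #= [set: T].
Proof.
move=> f_inj fA; apply/card_eqPle; split; first exact: card_leT.
apply: (card_le_trans (B := f @` [set: T])).
  have f_injT : {in [set: T] &, injective f} by move=> ? ? _ _ /f_inj.
  by move: (inj_card_eq f_injT); rewrite card_eq_le => /andP[].
by apply: subset_card_le => _ [t _ <-].
Qed.

Lemma nonempty_of_card_eqT T (A : set T) (t : T) : A #= [set: T] -> A !=set0.
Proof.
move=> AT; apply: contrapT => A_empty.
have A0 : A = set0 by apply/seteqP; split=> // u Au; apply: A_empty; exists u.
by move: AT; rewrite A0 card_eq_sym card_eq0 => /eqP/seteqP[/(_ t I)].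
Qed.

Section Encoding.
Variables (a b : nat -> nat) (x y : nat -> bool).
Hypotheses (a_inc : forall n, a n < a n.+1) (b_inc : forall k, b k < b k.+1).

Variables m c : nat -> nat.
Hypothesis m_sep : forall j, (m j).+1 < m j.+1.
Hypothesis c_gap : forall j, a (m j).+1 < c j < a (m j.+1).
Hypothesis c_not_left : forall j k, c j <> b k.

Definition selected (i : nat) : Prop := exists j, ipart a (m j) i.

Definition encode (s : nat -> bool) (i : nat) : bool :=
  if `[< selected i >] then x i else ~~ y i (+) `[< exists2 j, c j = i & s j >].

Lemma m_inc j : m j < m j.+1.
Proof. exact: ltn_trans (ltnSn _) (m_sep j). Qed.

Lemma gap_not_selected j i : a (m j).+1 <= i < a (m j.+1) -> ~ selected i.
Proof.
move=> /andP[lo hi] [j' /andP[lo' hi']].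
case: (leqP j' j) => jj'.
- have : (m j').+1 <= (m j).+1 by rewrite ltnS (inc_leq m_inc).
  rewrite -(inc_leq a_inc); lia.
- have : m j.+1 <= m j' by rewrite (inc_leq m_inc).
  rewrite -(inc_leq a_inc); lia.
Qed.

Lemma c_inc j : c j < c j.+1.
Proof. by have := c_gap j; have := c_gap j.+1; have := a_inc (m j.+1); lia. Qed.

Lemma c_not_selected j : ~ selected (c j).
Proof. by apply: (@gap_not_selected j); have := c_gap j; lia. Qed.

Lemma gap_start_not_code j j' : c j' <> a (m j).+1.
Proof.
move=> e; have := c_gap j'; case: (leqP j j') => jj'.
- have : (m j).+1 <= (m j').+1 by rewrite ltnS (inc_leq m_inc).
  rewrite -(inc_leq a_inc); lia.
- have : m j'.+1 <= m j by rewrite (inc_leq m_inc).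
  rewrite -(inc_leq a_inc); have := a_inc (m j); lia.
Qed.

(* Each J_k lies in a selected interval, or contains a point that is neither
   selected nor a code position: its left endpoint, or else the first point
   after the selected interval containing that endpoint. *)
Lemma interval_escapes k :
  (exists j, ipart b k `<=` ipart a (m j)) \/
  exists2 i, ipart b k i & ~ selected i /\ forall j, c j <> i.
Proof.
have [[j bk_sel]|bk_free] := pselect (selected (b k)); last first.
  by right; exists (b k); [exact: ipart_left | split=> // j; apply: c_not_left].
have [sub|/existsNP[i /not_implyP[Ji Ii]]] :=
  pselect (ipart b k `<=` ipart a (m j)); first by left; exists j.
right; exists (a (m j).+1).
- by move: bk_sel Ji Ii; rewrite /ipart /=; lia.
- split; last exact: gap_start_not_code.
  by apply: (@gap_not_selected j); rewrite leqnn (inc_ltn a_inc) m_sep.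
Qed.

Lemma encode_code s j : encode s (c j) = ~~ y (c j) (+) s j.
Proof.
rewrite /encode asboolF; last exact: c_not_selected.
congr (_ (+) _); case: asboolP => [[j' /(inc_inj c_inc) -> //]|nE].
by apply/esym/negP => sj; apply: nE; exists j.
Qed.

Lemma encode_inj : injective encode.
Proof.
move=> s t e; apply: funext => j.
by apply: (@addbI (~~ y (c j))); rewrite -!encode_code e.
Qed.

Lemma encode_Match_x s : Match x a (encode s).
Proof.
move=> N; exists (m N); first exact: inc_ge_id m_inc N.
by move=> i Ii; rewrite /encode asboolT //; exists N.
Qed.

Lemma encode_notin_Match_y s :
  (forall j, good_index a b x y (m j)) -> ~ Match y b (encode s).
Proof.
move=> good /(_ 0) [k _ agree].
case: (interval_escapes k) => [[j sub]|[i Ji [i_free i_not_code]]].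
- case: (good j k) => [//|]; apply=> i Ji.
  by rewrite (agree i Ji) /encode asboolT //; exists j; apply: sub.
- have := agree i Ji; rewrite /encode asboolF // asboolF; first by case: (y i).
  by move=> [j /i_not_code].
Qed.

End Encoding.

Lemma Match_subset_of_finitely_many_good (a b : nat -> nat) (x y : nat -> bool) :
  (forall n, a n < a n.+1) -> (forall k, b k < b k.+1) ->
  ~ infinitely_often (good_index a b x y) -> Match x a `<=` Match y b.
Proof.
move=> a_inc b_inc not_inf.
have [N bad] : exists N, forall n, N <= n -> ~ good_index a b x y n.
  apply: contrapT => H; apply: not_inf => N; apply: contrapT => nN.
  by apply: H; exists N => n Nn gn; apply: nN; exists n.
move=> z zx K; have [n Nn agree_n] := zx (maxn N (b K)).
have /existsNP[k /not_orP[/contrapT sub /contrapT agree_k]] :=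
  bad n (leq_trans (leq_maxl _ _) Nn).
exists k.
- (* b K <= n <= a n <= b k *)
  have /andP[an_bk _] := sub _ (ipart_left b_inc k).
  rewrite -(inc_leq b_inc); have := inc_ge_id a_inc n; have := leq_maxr N (b K).
  lia.
- by move=> i Ji; rewrite -(agree_k i Ji); apply: agree_n; apply: sub.
Qed.

Lemma card_difference_of_infinitely_many_good
    (a b : nat -> nat) (x y : nat -> bool) :
  (forall n, a n < a n.+1) -> (forall k, b k < b k.+1) ->
  (forall k, 2 <= b k.+1 - b k) ->
  infinitely_often (good_index a b x y) ->
  (Match x a `\` Match y b) #= [set: nat -> bool].
Proof.
move=> a_inc b_inc b_long inf_good.
have [m [m_good m_sparse]] :=
  sparse_subsequence (fun n => (b (a n.+1)).+2) inf_good.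
pose c j := (b (a (m j).+1)).+1.
have b_ge j := inc_ge_id b_inc (a (m j).+1).
have a_ge j := inc_ge_id a_inc (m j.+1).
have m_sep j : (m j).+1 < m j.+1.
  by have := m_sparse j; have := inc_ge_id a_inc (m j).+1; have := b_ge j; lia.
have c_gap j : a (m j).+1 < c j < a (m j.+1).
  by have := m_sparse j; have := b_ge j; have := a_ge j; rewrite /c; lia.
have c_not_left j k : c j <> b k.
  move=> e; have J_code : ipart b (a (m j).+1) (c j).
    by have := b_long (a (m j).+1); rewrite /ipart /c /=; lia.
  rewrite e in J_code; have ek := ipart_uniq b_inc J_code (ipart_left b_inc k).
  by move: e; rewrite /c ek; lia.
apply: (card_eqT_of_injection (encode_inj a_inc m_sep c_gap)) => s.
by split; [exact: encode_Match_x | exact: encode_notin_Match_y].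
Qed.

Theorem mainTheorem13 (a b : nat -> nat) (x y : nat -> bool) :
  interval_partition a -> interval_partition b ->
  (forall k, 2 <= b k.+1 - b k) ->
  [/\ (~ (Match x a `<=` Match y b) <->
       ((Match x a `\` Match y b) #= [set: nat -> bool])),
      (((Match x a `\` Match y b) #= [set: nat -> bool]) <->
       (forall N, exists2 n, N <= n &
          forall k, ~ (ipart b k `<=` ipart a n) \/ ~ agree_on (ipart b k) x y))
    & ((forall N, exists2 n, N <= n &
          forall k, ~ (ipart b k `<=` ipart a n) \/ ~ agree_on (ipart b k) x y) <->
       ~ (Match x a `<=` Match y b))].
Proof.
move=> [_ a_inc] [_ b_inc] b_long.
have one_three : ~ (Match x a `<=` Match y b) ->
    infinitely_often (good_index a b x y).
  by move=> nsub; apply: contrapT => fin; apply/nsub/Match_subset_of_finitely_many_good.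
have three_two := card_difference_of_infinitely_many_good (x := x) (y := y) a_inc b_inc b_long.
have two_one : (Match x a `\` Match y b) #= [set: nat -> bool] ->
    ~ (Match x a `<=` Match y b).
  by move=> /(nonempty_of_card_eqT (fun=> true)) [z [zx zy]] sub; apply/zy/sub.
split; split.
- by move/one_three/three_two.
- exact: two_one.
- by move/two_one/one_three.
- exact: three_two.
- by move/three_two/two_one.
- exact: one_three.
Qed.
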